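(* If $\mathfrak W$ is a bracket pattern category, then $\bigcup_{w\in\mathfrak W}A(w)=\{\|w\|\mid w\in\mathfrak W\}$.
   Context: $\mathbb N=\{1,2,\dots\}$, $\mathbb N_0=\mathbb N\cup\{0\}$. A bracket pattern is a non-empty finite subset $w\subseteq\mathbb N$; $\|w\|:=\max(w)$. For bracket patterns $w,w'$: superposition $w\cup w'$; for $j\in w$ the projection $\cap_j w:=\{i\in w\mid i\le j\}$; the dual $w^\dagger:=\{\|w\|-i\mid i\in\mathbb N_0,\ i<\|w\|,\ i\notin w\}$. A bracket pattern category is a (possibly empty) set of bracket patterns closed under superposition, duals and projections. The completion of a bracket pattern $w$ is $A(w):=\{j-i\mid j\in w,\ i\in\mathbb N_0,\ i\notin w,\ i<j\}$. *)

From HB Require Import structures.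
From mathcomp Require Import all_boot.
From mathcomp Require Import finmap.
Set Implicit Arguments. Unset Strict Implicit. Unset Printing Implicit Defensive.
Local Open Scope fset_scope.

Definition bracket_pattern (w : {fset nat}) : Prop :=
  w != fset0 /\ 0 \notin w.

Definition bnorm (w : {fset nat}) : nat := \max_(i <- enum_fset w) i.

Definition bproj (j : nat) (w : {fset nat}) : {fset nat} :=
  [fset i in w | i <= j].

Definition bdual (w : {fset nat}) : {fset nat} :=
  [fset (bnorm w - i)%N | i in iota 0 (bnorm w) & i \notin w].

Definition bp_category (W : {fset nat} -> Prop) : Prop :=
  [/\ (forall w, W w -> bracket_pattern w),
      (forall w w', W w -> W w' -> W (w `|` w')),
      (forall w, W w -> W (bdual w)) &
      (forall w j, W w -> j \in w -> W (bproj j w))].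

Definition completion (w : {fset nat}) (k : nat) : Prop :=
  exists j i, [/\ j \in w, i \notin w, i < j & k = j - i].

From HB Require Import structures.
From mathcomp Require Import all_boot.
From mathcomp Require Import finmap.
Set Implicit Arguments.
Unset Strict Implicit.
Unset Printing Implicit Defensive.

Local Open Scope fset_scope.

(* Every norm lies in its own completion, as [bnorm w - 0].  Conversely, for
   [j \in w], [i \notin w] and [i < j], projecting [w] to [j] keeps [i] out
   and makes [j] the norm, so [j - i] lies in the dual of the projection;
   projecting that dual to [j - i] yields a pattern of norm [j - i]. *)

Lemma leq_bnorm (w : {fset nat}) x : x \in w -> x <= bnorm w.
Proof. by move=> xw; apply: (leq_bigmax_seq x). Qed.

Lemma bnorm_eq (w : {fset nat}) j :
  j \in w -> (forall x, x \in w -> x <= j) -> bnorm w = j.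
Proof.
move=> jw le_w_j; apply/eqP; rewrite eqn_leq leq_bnorm // andbT.
by apply/bigmax_leqP_seq => x xw _; apply: le_w_j.
Qed.

Lemma mem_bnorm (w : {fset nat}) : w != fset0 -> bnorm w \in w.
Proof.
case/fset0Pn=> x xw; rewrite /bnorm big_seq_fsetE /=.
have w_gt0 : 0 < #|{: w}| by apply/card_gt0P; exists [` xw].
by have [y ->] := eq_bigmax val w_gt0; apply: valP.
Qed.

Lemma bnorm_proj (w : {fset nat}) j : j \in w -> bnorm (bproj j w) = j.
Proof.
move=> jw; apply: bnorm_eq => [|x]; first by rewrite !inE jw leqnn.
by rewrite !inE => /andP[].
Qed.

Lemma mem_bdual (w : {fset nat}) i :
  i < bnorm w -> i \notin w -> bnorm w - i \in bdual w.
Proof.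
move=> lt_i_w iw; apply/imfsetP; exists i => //.
by rewrite !inE mem_iota lt_i_w iw.
Qed.

Lemma mem_dual_proj (w : {fset nat}) j i :
  j \in w -> i \notin w -> i < j -> j - i \in bdual (bproj j w).
Proof.
move=> jw iw lt_ij; rewrite -{1}(bnorm_proj jw) mem_bdual ?bnorm_proj //.
by rewrite !inE negb_and iw.
Qed.

Lemma completion_bnorm (w : {fset nat}) :
  bracket_pattern w -> completion w (bnorm w).
Proof.
case=> w_neq0 w0; have w_max := mem_bnorm w_neq0.
exists (bnorm w), 0; split; rewrite ?subn0 //.
by rewrite lt0n; apply: contraNneq w0 => <-.
Qed.

Theorem proposition7p7 (W : {fset nat} -> Prop) :
  bp_category W ->
  forall k : nat,
    (exists w, W w /\ completion w k) <-> (exists w, W w /\ k = bnorm w).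
Proof.
case=> W_bp _ W_dual W_proj k; split=> [[w [Ww [j [i [jw iw lt_ij ->]]]]]|].
- have ji_dual := mem_dual_proj jw iw lt_ij.
  have W_dual_proj : W (bdual (bproj j w)) by apply/W_dual/W_proj.
  exists (bproj (j - i) (bdual (bproj j w))).
  by rewrite bnorm_proj //; split=> //; apply: W_proj W_dual_proj ji_dual.
- by case=> w [Ww ->]; exists w; split; last exact/completion_bnorm/W_bp.
Qed.
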